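(* Let $\mathcal{F}$ be a family of finite lattices (considered up to isomorphism) that is closed under vertical sum and contains the singleton lattice. Let $f(n)$ and $f_{\mathrm{vi}}(n)$ be the numbers of $n$-element lattices and $n$-element vertically indecomposable lattices in $\mathcal{F}$, respectively. Let $N \ge 2$ be an integer, and let $\underline{f} \colon \mathbb{N}^+ \to \mathbb{N}^+$ be the sequence defined by $\underline{f}(1)=1$, \[ \underline{f}(n) = \sum_{k=2}^n f_{\mathrm{vi}}(k)\, \underline{f}(n-k+1) \quad \text{for } n=2,3,\ldots,N, \] and \[ \underline{f}(n) = \sum_{k=2}^N f_{\mathrm{vi}}(k)\, \underline{f}(n-k+1) \quad \text{for } n \ge N+1. \] Then $f(n) \ge \underline{f}(n)$ for all $n \ge 1$. Furthermore, the infinite sequence $\underline{f}$ is determined by $f_{\mathrm{vi}}(1), f_{\mathrm{vi}}(2), \ldots, f_{\mathrm{vi}}(N)$ through a homogeneous linear recurrence relation of order $N-1$ with constant coefficients.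
   Context: All lattices are finite, nonempty and unlabeled. The vertical sum $L+U$ of lattices $L$ and $U$ is obtained by identifying the top element of $L$ with the bottom element of $U$. A knot of a lattice $X$ is an element distinct from the top and bottom of $X$ that is comparable to every element of $X$; a lattice is vertically indecomposable if it has no knot. By convention the singleton lattice is counted as vertically indecomposable. *)

From mathcomp Require Import all_boot all_fingroup.
From mathcomp Require Import boolp.
Set Implicit Arguments. Unset Strict Implicit. Unset Printing Implicit Defensive.

Definition is_lattice (T : finType) (le : rel T) : Prop :=
  [/\ 0 < #|T|, [/\ reflexive le, antisymmetric le & transitive le],
      (forall x y, exists m, [/\ le m x, le m y &
                                 forall z, le z x -> le z y -> le z m]) &
      (forall x y, exists j, [/\ le x j, le y j &
                                 forall z, le x z -> le y z -> le j z])].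

Definition lattice_iso (T1 T2 : finType) (le1 : rel T1) (le2 : rel T2) : Prop :=
  exists f : T1 -> T2, bijective f /\ forall x y, le1 x y = le2 (f x) (f y).

Definition is_top (T : finType) (le : rel T) (x : T) : bool := [forall y, le y x].
Definition is_bot (T : finType) (le : rel T) (x : T) : bool := [forall y, le x y].

Definition single_le : rel unit := fun _ _ => true.

(* Vertical sum L + U: the carrier is L together with the elements of U
   other than its bottom (the bottom of U is identified with the top of L);
   every element of L lies below every element of U. *)
Definition vsum_le (T1 T2 : finType) (le1 : rel T1) (le2 : rel T2) :
  rel (T1 + {y : T2 | ~~ is_bot le2 y})%type :=
  fun a b =>
    match a, b with
    | inl x, inl y => le1 x y
    | inr x, inr y => le2 (val x) (val y)
    | inl _, inr _ => true
    | inr _, inl _ => false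
    end.

Arguments vsum_le {T1 T2} le1 le2 _ _.

Definition knot (T : finType) (le : rel T) (x : T) : bool :=
  [&& ~~ is_top le x, ~~ is_bot le x & [forall y, le x y || le y x]].
Definition vert_indec (T : finType) (le : rel T) : Prop :=
  ~ exists x, knot le x.

(* Counting n-element structures in a family up to isomorphism:
   relations on 'I_n, partitioned into isomorphism classes. *)
Definition lat_rel (n : nat) := {ffun 'I_n -> {ffun 'I_n -> bool}}.
Definition rel_iso (n : nat) (R1 R2 : lat_rel n) : bool :=
  [exists p : {perm 'I_n}, [forall x, [forall y, R1 x y == R2 (p x) (p y)]]].
Definition count_classes (P : forall T : finType, rel T -> Prop) (n : nat) : nat :=
  #|equivalence_partition (@rel_iso n)
      [set R : lat_rel n | `[< P 'I_n (fun x y => R x y) >]]|.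

Definition fam_count (F : forall T : finType, rel T -> Prop) (n : nat) : nat :=
  count_classes F n.
Definition fam_count_vi (F : forall T : finType, rel T -> Prop) (n : nat) : nat :=
  count_classes (fun T le => F T le /\ vert_indec le) n.

(* A vertical sum L = A + B in which A is vertically indecomposable with
   |A| >= 2 determines A and B up to isomorphism: the top of A is the least
   knot of L, or the top of L when B is trivial, so every isomorphism
   L ~ A' + B' maps it to the top of A' and restricts to isomorphisms of the
   down-sets (A ~ A') and of the up-sets (B ~ B').  Hence pairs of classes
   (A, B) with |A| = k >= 2 and |A| + |B| - 1 = n give pairwise
   non-isomorphic n-element members of the family, so
   f(n) >= sum_(k=2..n) f_vi(k) f(n-k+1).  The lower sequence keeps only some
   of these terms, so it stays below f by strong induction; for n > N its
   defining recurrence, re-indexed, is the linear recurrence of order N-1. *)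

From mathcomp Require Import all_boot all_fingroup.
From mathcomp Require Import boolp zify.
Set Implicit Arguments. Unset Strict Implicit. Unset Printing Implicit Defensive.

Lemma iso_refl (T : finType) (le : rel T) : lattice_iso le le.
Proof. by exists id; split=> //; exists id. Qed.

Lemma iso_sym (T1 T2 : finType) (le1 : rel T1) (le2 : rel T2) :
  lattice_iso le1 le2 -> lattice_iso le2 le1.
Proof.
case=> f [[g fK gK] le_f]; exists g; split; first by exists f.
by move=> x y; rewrite le_f !gK.
Qed.

Lemma iso_trans (T1 T2 T3 : finType) (le1 : rel T1) (le2 : rel T2) (le3 : rel T3) :
  lattice_iso le1 le2 -> lattice_iso le2 le3 -> lattice_iso le1 le3.
Proof.
case=> f [f_bij le_f] [h [h_bij le_h]]; exists (h \o f); split; first exact: bij_comp.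
by move=> x y /=; rewrite le_f le_h.
Qed.

Lemma iso_card (T1 T2 : finType) (le1 : rel T1) (le2 : rel T2) :
  lattice_iso le1 le2 -> #|T1| = #|T2|.
Proof. by case=> f [/bij_eq_card]. Qed.

Lemma iso_of_embedding (T1 T2 : finType) (le1 : rel T1) (le2 : rel T2)
    (f : T1 -> T2) (g : T2 -> T1) :
  reflexive le1 -> antisymmetric le1 -> cancel g f ->
  (forall x y, le1 x y = le2 (f x) (f y)) -> lattice_iso le1 le2.
Proof.
move=> refl1 anti1 gK le_f.
have f_inj : injective f by move=> x y fxy; apply: anti1; rewrite !le_f fxy -!le_f !refl1.
by exists f; split=> //; exists g => // x; apply: f_inj; rewrite gK.
Qed.

Lemma fin_directed_ub (T : finType) (r : rel T) : 0 < #|T| -> transitive r ->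
  (forall x y, exists z, r x z /\ r y z) -> exists t, forall y, r y t.
Proof.
case/card_gt0P=> x0 _ r_trans ub.
suff [t rt] : exists t, forall y, y \in enum T -> r y t.
  by exists t => y; apply: rt; rewrite mem_enum.
elim: (enum T) => [|a s [t rt]]; first by exists x0.
have [z [raz rtz]] := ub a t.
by exists z => y; rewrite inE => /predU1P [->|/rt ryt] //; apply: r_trans rtz.
Qed.

Lemma lattice_top (T : finType) (le : rel T) : is_lattice le -> exists t, is_top le t.
Proof.
case=> T_gt0 [_ _ le_trans] _ join.
have [|t tP] := fin_directed_ub T_gt0 le_trans; last by exists t; apply/forallP.
by move=> x y; have [z [xz yz _]] := join x y; exists z.
Qed.

Lemma lattice_bot (T : finType) (le : rel T) : is_lattice le -> exists b, is_bot le b.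
Proof.
case=> T_gt0 [_ _ le_trans] meet _.
have [|b bP] := fin_directed_ub T_gt0 (rev_trans le_trans); last by exists b; apply/forallP.
by move=> x y; have [z [zx zy _]] := meet x y; exists z.
Qed.

Definition least_knot_or_top (T : finType) (le : rel T) (t : T) : bool :=
  [forall x, knot le x ==> le t x] &&
  (if [exists x, knot le x] then knot le t else is_top le t).

Lemma least_knot_or_top_unique (T : finType) (le : rel T) (t t' : T) :
  antisymmetric le -> least_knot_or_top le t -> least_knot_or_top le t' -> t = t'.
Proof.
move=> anti /andP [/forall_inP t_min t_ok] /andP [/forall_inP t'_min t'_ok].
case: ifP t_ok t'_ok => _ t_ok t'_ok; first by apply: anti; rewrite t_min ?t'_min.
by apply: anti; rewrite (forallP t_ok) (forallP t'_ok).
Qed.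

Definition sub_le (T : finType) (le : rel T) (P : pred T) : rel {x | P x} :=
  fun a b => le (val a) (val b).
Arguments sub_le {T} le P _ _.

Section Transport.

Variables (T1 T2 : finType) (le1 : rel T1) (le2 : rel T2) (f : T1 -> T2) (g : T2 -> T1).
Hypotheses (fK : cancel f g) (gK : cancel g f).
Hypothesis le_f : forall x y, le1 x y = le2 (f x) (f y).

Lemma forall_bij (p : pred T2) : [forall x, p (f x)] = [forall y, p y].
Proof. by apply/forallP/forallP => p_all y //; rewrite -(gK y). Qed.

Lemma exists_bij (p : pred T2) : [exists x, p (f x)] = [exists y, p y].
Proof. by apply/existsP/existsP => [] [x px]; [exists (f x) | exists (g x); rewrite gK]. Qed.

Lemma is_top_bij x : is_top le2 (f x) = is_top le1 x.
Proof. by rewrite /is_top -forall_bij; apply: eq_forallb => y; rewrite le_f. Qed.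

Lemma is_bot_bij x : is_bot le2 (f x) = is_bot le1 x.
Proof. by rewrite /is_bot -forall_bij; apply: eq_forallb => y; rewrite le_f. Qed.

Lemma knot_bij x : knot le2 (f x) = knot le1 x.
Proof.
rewrite /knot is_top_bij is_bot_bij -forall_bij.
by congr [&& _, _ & _]; apply: eq_forallb => y; rewrite !le_f.
Qed.

Lemma least_knot_or_top_bij t : least_knot_or_top le2 (f t) = least_knot_or_top le1 t.
Proof.
rewrite /least_knot_or_top -forall_bij -exists_bij knot_bij is_top_bij.
congr (_ && (if _ then _ else _)); last by apply: eq_existsb => x; rewrite knot_bij.
by apply: eq_forallb => x; rewrite knot_bij le_f.
Qed.

Lemma sub_le_iso (P1 : pred T1) (P2 : pred T2) :
  (forall x, P2 (f x) = P1 x) -> lattice_iso (sub_le le1 P1) (sub_le le2 P2).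
Proof.
move=> P_f.
have fP : forall a : {x | P1 x}, P2 (f (val a)) by move=> a; rewrite P_f (valP a).
have gP : forall b : {y | P2 y}, P1 (g (val b)) by move=> b; rewrite -P_f gK (valP b).
exists (fun a => exist P2 _ (fP a)); split; last by move=> a b; rewrite /sub_le le_f.
by exists (fun b => exist P1 _ (gP b)) => [a|b]; apply: val_inj; rewrite /= ?fK ?gK.
Qed.

End Transport.

Section VerticalSum.

Variables (T1 T2 : finType) (leA : rel T1) (leB : rel T2).
Local Notation le := (vsum_le leA leB).
Hypotheses (reflA : reflexive leA) (antiA : antisymmetric leA).
Hypotheses (reflB : reflexive leB) (antiB : antisymmetric leB) (transB : transitive leB).

Lemma vsum_antisym : antisymmetric le.
Proof.
move=> [a|s] [b|t] //=; first by move/antiA->.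
by move/antiB=> st; congr inr; apply: val_inj.
Qed.

Lemma vsum_knot_above x a : vert_indec leA -> knot le x -> le (inl a) x.
Proof.
move=> indecA; case: x => [b|//] /and3P [_ not_bot /forallP cmp] /=.
apply/negPn/negP => ab; apply: indecA; exists b; apply/and3P; split.
- by apply: contra ab => /forallP.
- apply: contra not_bot => /forallP b_bot; apply/forallP => -[c|//]; exact: b_bot.
- by apply/forallP => c; exact: (cmp (inl c)).
Qed.

Variables (tA : T1) (tA_top : is_top leA tA).

Lemma vsum_top_knot (t : {y : T2 | ~~ is_bot leB y}) :
  1 < #|T1| -> knot le (inl tA).
Proof.
rewrite (cardD1 tA) inE ltnS => /card_gt0P [a /andP [a_neq _]].
apply/and3P; split.
- by apply/negP => /forallP /(_ (inr t)).
- apply/negP => /forallP /(_ (inl a)) /= tAa; move/eqP: a_neq; apply.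
  by apply: antiA; rewrite tAa (forallP tA_top).
- by apply/forallP => -[b|s] //=; rewrite (forallP tA_top) orbT.
Qed.

Lemma vsum_least_knot_or_top :
  vert_indec leA -> 1 < #|T1| -> least_knot_or_top le (inl tA).
Proof.
move=> indecA A_gt1; apply/andP; split.
  by apply/forall_inP => x; exact: vsum_knot_above.
case: ifPn => [/existsP [[a|t] knot_x]|/existsPn no_knot]; last first.
- apply/forallP => -[a|t] /=; first exact: (forallP tA_top).
  by move: (no_knot (inl tA)); rewrite (vsum_top_knot t).
- exact: vsum_top_knot.
have <- // : a = tA.
by apply: antiA; rewrite (forallP tA_top) (vsum_knot_above tA indecA knot_x : leA tA a).
Qed.

Lemma vsum_lower_iso : lattice_iso leA (sub_le le (le^~ (inl tA))).
Proof.
pose lower (v : {x | le x (inl tA)}) := if val v is inl a then a else tA.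
pose inl_low a : {x | le x (inl tA)} := exist _ (inl a) (forallP tA_top a).
apply: (@iso_of_embedding _ _ _ _ inl_low lower) => //.
by case=> -[a|s] v_low; apply: val_inj.
Qed.

Definition vsum_upper (b : T2) : (T1 + {y : T2 | ~~ is_bot leB y})%type :=
  if insub b is Some s then inr s else inl tA.

Lemma vsum_upper_le b c : le (vsum_upper b) (vsum_upper c) = leB b c.
Proof.
rewrite /vsum_upper; case: insubP => [s _ <-|]; case: insubP => [t _ <-|] //=.
- rewrite negbK => /forallP c_bot; apply/esym/negP => s_c.
  move: (valP s) => /negP; apply; apply/forallP => d.
  exact: transB s_c (c_bot d).
- by rewrite negbK => /forallP ->.
- by rewrite reflA => _; rewrite negbK => /forallP ->.
Qed.

Variables (bB : T2) (bB_bot : is_bot leB bB).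

Lemma vsum_upper_iso : lattice_iso leB (sub_le le (le (inl tA))).
Proof.
have upper_above b : le (inl tA) (vsum_upper b).
  by rewrite /vsum_upper; case: insubP => [s _ _|_] /=.
pose proj (v : {x | le (inl tA) x}) := if val v is inr s then val s else bB.
pose upper b : {x | le (inl tA) x} := exist (le (inl tA)) _ (upper_above b).
apply: (@iso_of_embedding _ _ _ _ upper proj) => //.
case=> -[a|s] v_up; apply: val_inj; rewrite /proj /upper /= /vsum_upper; last by rewrite (valK s).
have -> : a = tA by apply: antiA; rewrite (v_up : leA tA a) (forallP tA_top).
by rewrite insubF // bB_bot.
by move=> b c; rewrite /sub_le /= vsum_upper_le.
Qed.

End VerticalSum.

Lemma vsum_cancel (T1 T2 T1' T2' : finType) (leA : rel T1) (leB : rel T2)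
    (leA' : rel T1') (leB' : rel T2') :
  is_lattice leA -> vert_indec leA -> 1 < #|T1| -> is_lattice leB ->
  is_lattice leA' -> vert_indec leA' -> 1 < #|T1'| -> is_lattice leB' ->
  lattice_iso (vsum_le leA leB) (vsum_le leA' leB') ->
  lattice_iso leA leA' /\ lattice_iso leB leB'.
Proof.
move=> LA indecA A_gt1 LB LA' indecA' A'_gt1 LB' [f [[g fK gK] le_f]].
have [[tA tA_top] [tA' tA'_top]] := (lattice_top LA, lattice_top LA').
have [[bB bB_bot] [bB' bB'_bot]] := (lattice_bot LB, lattice_bot LB').
case: LA LB LA' LB' => _ [reflA antiA _] _ _ [_ [reflB antiB transB] _ _].
case=> _ [reflA' antiA' _] _ _ [_ [reflB' antiB' transB'] _ _].
have f_tA : f (inl tA) = inl tA'.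
  apply: (least_knot_or_top_unique (vsum_antisym antiA' antiB')).
    by rewrite (least_knot_or_top_bij gK le_f); exact: vsum_least_knot_or_top.
  exact: vsum_least_knot_or_top.
split.
  apply: iso_trans (vsum_lower_iso leB reflA antiA tA_top) _.
  apply: iso_trans (iso_sym (vsum_lower_iso leB' reflA' antiA' tA'_top)).
  by apply: (sub_le_iso fK gK le_f) => x; rewrite -f_tA -le_f.
apply: iso_trans (vsum_upper_iso reflA antiA reflB antiB transB tA_top bB_bot) _.
apply: iso_trans (iso_sym (vsum_upper_iso reflA' antiA' reflB' antiB' transB' tA'_top bB'_bot)).
by apply: (sub_le_iso fK gK le_f) => x; rewrite -f_tA -le_f.
Qed.

Definition as_rel n (R : lat_rel n) : rel 'I_n := fun x y => R x y.

(* Junk [false] entries occur only when [#|T| <> n]. *)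
Definition to_lat_rel (T : finType) (le : rel T) (n : nat) : lat_rel n :=
  [ffun i : 'I_n => [ffun j : 'I_n =>
     if (onth (enum T) i, onth (enum T) j) is (Some a, Some b) then le a b else false]].

Lemma to_lat_rel_iso (T : finType) (le : rel T) n :
  #|T| = n -> lattice_iso le (as_rel (to_lat_rel le n)).
Proof.
move=> card_T; exists (fun x => cast_ord card_T (enum_rank x)); split.
  apply: bij_comp; first by exists (cast_ord (esym card_T)); [exact: cast_ordK|exact: cast_ordKV].
  by exists enum_val; [exact: enum_rankK|exact: enum_valK].
have onth_rank x : onth (enum T) (cast_ord card_T (enum_rank x)) = Some x.
  by rewrite onthE /= (nth_map x) ?nth_enum_rank // -cardE ltn_ord.
by move=> x y; rewrite /as_rel !ffunE !onth_rank.
Qed.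

Lemma rel_isoP n (R1 R2 : lat_rel n) :
  reflect (lattice_iso (as_rel R1) (as_rel R2)) (rel_iso R1 R2).
Proof.
apply: (iffP existsP) => [[p /forallP p_iso]|[f [f_bij le_f]]].
  exists p; split; first exact: (injF_bij (@perm_inj _ p)).
  by move=> x y; apply/eqP; exact: forallP (p_iso x) y.
exists (perm (bij_inj f_bij)); apply/forallP => x; apply/forallP => y.
by rewrite !permE -/(as_rel R1 x y) le_f.
Qed.

Lemma rel_iso_equiv n : equivalence_rel (@rel_iso n).
Proof.
move=> R1 R2 R3; split; first exact/rel_isoP/iso_refl.
move/rel_isoP => iso12; apply/rel_isoP/rel_isoP => [iso13|iso23].
  exact: iso_trans (iso_sym iso12) iso13.
exact: iso_trans iso12 iso23.
Qed.

Definition lat_members (P : forall T : finType, rel T -> Prop) n :=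
  [set R : lat_rel n | `[< P 'I_n (as_rel R) >]].
Definition lat_classes (P : forall T : finType, rel T -> Prop) n :=
  equivalence_partition (@rel_iso n) (lat_members P n).

Lemma lat_classes_partition P n : partition (lat_classes P n) (lat_members P n).
Proof. by apply: equivalence_partitionP => R1 R2 R3 _ _ _; apply: rel_iso_equiv. Qed.

Lemma pblock_lat_classes P n (R1 R2 : lat_rel n) :
  R1 \in lat_members P n -> R2 \in lat_members P n ->
  (R2 \in pblock (lat_classes P n) R1) = rel_iso R1 R2.
Proof.
move=> R1P R2P; apply: pblock_equivalence_partition => // R R' R'' _ _ _.
exact: rel_iso_equiv.
Qed.

Lemma count_classes_ge (P : forall T : finType, rel T -> Prop)
    (P_iso : forall (T1 T2 : finType) (le1 : rel T1) (le2 : rel T2),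
       lattice_iso le1 le2 -> P T1 le1 -> P T2 le2)
    n (Y : finType) (T : Y -> finType) (le : forall y, rel (T y)) :
  (forall y, #|T y| = n) -> (forall y, P (T y) (le y)) ->
  (forall y1 y2, lattice_iso (le y1) (le y2) -> y1 = y2) ->
  #|Y| <= count_classes P n.
Proof.
move=> card_T Ple iso_eq.
have [/eqP cover_classes _ _] := and3P (lat_classes_partition P n).
pose R y := to_lat_rel (le y) n.
have R_iso y : lattice_iso (le y) (as_rel (R y)) by apply: to_lat_rel_iso.
have R_mem y : R y \in lat_members P n.
  by rewrite inE; apply/asboolP; apply: P_iso (R_iso y) (Ple y).
have block_inj : injective (fun y => pblock (lat_classes P n) (R y)).
  move=> y1 y2 /= same_block; apply: iso_eq.
  have /rel_isoP iso12 : rel_iso (R y1) (R y2).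
    by rewrite -(pblock_lat_classes (R_mem y1) (R_mem y2)) same_block mem_pblock cover_classes.
  exact: iso_trans (R_iso y1) (iso_trans iso12 (iso_sym (R_iso y2))).
rewrite -(card_imset predT block_inj); apply: subset_leq_card.
by apply/subsetP => C /imsetP [y _ ->]; rewrite pblock_mem ?cover_classes.
Qed.

Definition iso_class (P : forall T : finType, rel T -> Prop) n :=
  {C : {set lat_rel n} | C \in lat_classes P n}.

Lemma card_iso_class P n : #|{: iso_class P n}| = count_classes P n.
Proof. by rewrite card_sig. Qed.

Definition class_rep P n (C : iso_class P n) : lat_rel n :=
  odflt [ffun _ => [ffun _ => false]] [pick R in val C].

Lemma class_rep_in P n (C : iso_class P n) : class_rep C \in val C.
Proof.
rewrite /class_rep; case: pickP => [//|C0].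
have [_ _ set0_notin] := and3P (lat_classes_partition P n).
suff C_empty : val C = set0 by move: set0_notin (valP C); rewrite C_empty => /negPf ->.
by apply/setP => R; rewrite inE C0.
Qed.

Lemma class_rep_mem P n (C : iso_class P n) : class_rep C \in lat_members P n.
Proof.
have [/eqP <- _ _] := and3P (lat_classes_partition P n).
by apply/bigcupP; exists (val C); [exact: valP | exact: class_rep_in].
Qed.

Lemma class_repP P n (C : iso_class P n) : P 'I_n (as_rel (class_rep C)).
Proof. by have := class_rep_mem C; rewrite inE => /asboolP. Qed.

Lemma class_rep_inj P n (C1 C2 : iso_class P n) :
  lattice_iso (as_rel (class_rep C1)) (as_rel (class_rep C2)) -> C1 = C2.
Proof.
move/rel_isoP => iso12; apply: val_inj.
have [_ triv _] := and3P (lat_classes_partition P n).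
rewrite -(def_pblock triv (valP C1) (class_rep_in C1)).
rewrite -(def_pblock triv (valP C2) (class_rep_in C2)).
by apply/esym/same_pblock; rewrite ?pblock_lat_classes ?class_rep_mem.
Qed.

Lemma card_vsum (T1 T2 : finType) (leB : rel T2) :
  is_lattice leB -> #|{: (T1 + {y : T2 | ~~ is_bot leB y})%type}| = #|T1| + #|T2|.-1.
Proof.
move=> LB; have [b b_bot] := lattice_bot LB; case: LB => _ [_ antiB _] _ _.
have bot_eq y : is_bot leB y = (y == b).
  apply/idP/eqP => [y_bot|->//]; apply: antiB.
  by rewrite (forallP y_bot) (forallP b_bot).
rewrite card_sum card_sig -(cardC1 b); congr (_ + _).
by apply: eq_card => y; rewrite !inE bot_eq.
Qed.

Lemma vsum_count_le (F : forall T : finType, rel T -> Prop)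
  (F_lat : forall (T : finType) (le : rel T), F T le -> is_lattice le)
  (F_iso : forall (T1 T2 : finType) (le1 : rel T1) (le2 : rel T2),
      lattice_iso le1 le2 -> F T1 le1 -> F T2 le2)
  (F_vsum : forall (T1 T2 : finType) (le1 : rel T1) (le2 : rel T2),
      F T1 le1 -> F T2 le2 -> F _ (vsum_le le1 le2)) n :
  1 < n ->
  \sum_(2 <= k < n.+1) fam_count_vi F k * fam_count F (n - k + 1) <= fam_count F n.
Proof.
move=> n_gt1; pose Fvi (T : finType) (le : rel T) := F T le /\ vert_indec le.
(* [i] stands for the size [k = i.+2] of the lower summand. *)
pose Y := {i : 'I_n.-1 & (iso_class Fvi i.+2 * iso_class F (n - i.+1))%type}.
have -> : \sum_(2 <= k < n.+1) fam_count_vi F k * fam_count F (n - k + 1) = #|{: Y}|.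
  rewrite card_tagged sumnE big_map big_enum /= big_add1 /= big_add1 /= big_mkord.
  apply: eq_bigr => i _; rewrite card_prod !card_iso_class; congr (_ * fam_count F _).
  by have := ltn_ord i; lia.
pose lower (y : Y) := as_rel (class_rep (tagged y).1).
pose upper (y : Y) := as_rel (class_rep (tagged y).2).
have lower_lat y : is_lattice (lower y) by case: (class_repP (tagged y).1) => /F_lat.
have lower_indec y : vert_indec (lower y) by case: (class_repP (tagged y).1).
have lower_gt1 (y : Y) : 1 < #|'I_(tag y).+2| by rewrite card_ord.
have upper_lat y : is_lattice (upper y) by apply: F_lat (class_repP (tagged y).2).
apply: (count_classes_ge F_iso (le := fun y => vsum_le (lower y) (upper y))).
- case=> i [A B]; rewrite card_vsum // !card_ord /=; have := ltn_ord i; lia.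
- by move=> y; apply: F_vsum; [case: (class_repP (tagged y).1) | exact: class_repP].
move=> y1 y2 iso12.
have [iso_lower iso_upper] := vsum_cancel (lower_lat y1) (lower_indec y1) (lower_gt1 y1)
  (upper_lat y1) (lower_lat y2) (lower_indec y2) (lower_gt1 y2) (upper_lat y2) iso12.
case: y1 y2 iso_lower iso_upper {iso12} => i1 [A1 B1] [i2 [A2 B2]] /= iso_lower iso_upper.
have /eqP := iso_card iso_lower; rewrite !card_ord !eqSS => /eqP/val_inj i12.
case: i2 / i12 A2 B2 iso_lower iso_upper => A2 B2 iso_lower iso_upper.
by move: (class_rep_inj iso_lower) (class_rep_inj iso_upper) => /= -> ->.
Qed.

Lemma truncated_recurrence_le (a f g : nat -> nat) (N : nat) :
  g 1 <= f 1 ->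
  (forall n, 1 < n -> \sum_(2 <= k < n.+1) a k * f (n - k + 1) <= f n) ->
  (forall n, 1 < n -> g n = \sum_(2 <= k < (minn n N).+1) a k * g (n - k + 1)) ->
  forall n, 0 < n -> g n <= f n.
Proof.
move=> g1 f_super g_rec; elim/ltn_ind => -[|[|n]] IH // _.
rewrite g_rec // (leq_trans _ (f_super _ _)) //.
apply: (@leq_trans (\sum_(2 <= k < (minn n.+2 N).+1) a k * f (n.+2 - k + 1))).
  rewrite big_nat [X in _ <= X]big_nat; apply: leq_sum => k /andP [k_ge2 k_le].
  by rewrite leq_mul2l IH ?orbT //; lia.
by apply: (le_big_nat leqnn (fun x y => leq_addr y x)); rewrite // ltnS geq_minl.
Qed.

Lemma sum_recurrence_reindex (a g : nat -> nat) (N n : nat) : N < n ->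
  \sum_(2 <= k < N.+1) a k * g (n - k + 1) = \sum_(1 <= j < N) a j.+1 * g (n - j).
Proof.
move=> lt_Nn; rewrite big_add1 /=; apply: eq_big_nat => j /andP [_ lt_jN].
by rewrite addn1 subnSK // (ltn_trans lt_jN).
Qed.

Lemma fam_count1_gt0 (F : forall T : finType, rel T -> Prop)
  (F_iso : forall (T1 T2 : finType) (le1 : rel T1) (le2 : rel T2),
      lattice_iso le1 le2 -> F T1 le1 -> F T2 le2) :
  F unit single_le -> 0 < fam_count F 1.
Proof.
move=> F_single; rewrite -card_unit.
by apply: (count_classes_ge F_iso (le := fun _ : unit => single_le)) => // -[] [].
Qed.

Theorem theorem2p6 (F : forall T : finType, rel T -> Prop)
  (F_lat : forall (T : finType) (le : rel T), F T le -> is_lattice le)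
  (F_iso : forall (T1 T2 : finType) (le1 : rel T1) (le2 : rel T2),
      lattice_iso le1 le2 -> F T1 le1 -> F T2 le2)
  (F_single : F unit single_le)
  (F_vsum : forall (T1 T2 : finType) (le1 : rel T1) (le2 : rel T2),
      F T1 le1 -> F T2 le2 -> F _ (vsum_le le1 le2))
  (N : nat) (hN : 2 <= N) (g : nat -> nat)
  (g1 : g 1 = 1)
  (g_low : forall n, 2 <= n <= N ->
      g n = \sum_(2 <= k < n.+1) fam_count_vi F k * g (n - k + 1))
  (g_high : forall n, N < n ->
      g n = \sum_(2 <= k < N.+1) fam_count_vi F k * g (n - k + 1)) :
  (forall n, 1 <= n -> g n <= fam_count F n) /\
  exists c : nat -> nat,
    (forall j, 1 <= j < N -> c j = fam_count_vi F j.+1) /\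
    (forall n, N < n -> g n = \sum_(1 <= j < N) c j * g (n - j)).
Proof.
split.
  apply: (truncated_recurrence_le (a := fam_count_vi F) (N := N)).
  - by rewrite g1 (fam_count1_gt0 F_iso F_single).
  - exact: vsum_count_le.
  move=> n n_gt1; case: leqP => [le_nN|lt_Nn]; first by rewrite g_low ?n_gt1.
  exact: g_high.
exists (fun j => fam_count_vi F j.+1); split=> // n lt_Nn.
by rewrite g_high // sum_recurrence_reindex.
Qed.
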